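(* Let $\Lambda$ be a $d$-dimensional Euclidean lattice of minimum $1$, and let $\mathcal V=-\mathcal V\subset\Lambda\setminus\{0\}$ be a finite set of nonzero elements of squared Euclidean length at most $2$ whose convex hull $P$ is $d$-dimensional. Then (i) the interior of $P$ meets $\Lambda$ only in $\{0\}$; (ii) if moreover every element of $\mathcal V$ has squared Euclidean length strictly smaller than $2$, then $P\cap\Lambda=\mathcal V\cup\{0\}$ and $\mathcal V$ is the set of vertices of $P$.
   Context: The minimum of a lattice is the smallest squared Euclidean length of its nonzero elements. *)

From HB Require Import structures.
From mathcomp Require Import all_boot all_order all_algebra.
Set Implicit Arguments. Unset Strict Implicit. Unset Printing Implicit Defensive.
Import Order.TTheory GRing.Theory Num.Theory.
Local Open Scope ring_scope.

Section Defs.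
Variables (R : realFieldType) (d : nat).

Definition sqnorm (x : 'rV[R]_d) : R := \sum_(i < d) (x ord0 i) ^+ 2.

(* the lattice with basis matrix B (rows = basis vectors): { z B | z in Z^d } *)
Definition in_lattice (B : 'M[R]_d) (x : 'rV[R]_d) : Prop :=
  exists z : 'rV[int]_d, x = map_mx (fun k : int => k%:~R) z *m B.

Definition full_rank_lattice (B : 'M[R]_d) : Prop := B \in unitmx.

Definition lattice_min (B : 'M[R]_d) (m : R) : Prop :=
  (exists2 x, in_lattice B x & (x != 0) && (sqnorm x == m)) /\
  (forall x, in_lattice B x -> x != 0 -> m <= sqnorm x).

Definition conv (V : seq 'rV[R]_d) (x : 'rV[R]_d) : Prop :=
  exists l : nat -> R, (forall i, 0 <= l i) /\
    \sum_(i < size V) l i = 1 /\ x = \sum_(i < size V) l i *: V`_i.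

(* the affine hull of V is d-dimensional *)
Definition full_dim (V : seq 'rV[R]_d) : Prop :=
  exists2 v0, v0 \in V & \rank (\matrix_(i < size V) (V`_i - v0)) = d.

Definition interior (S : 'rV[R]_d -> Prop) (x : 'rV[R]_d) : Prop :=
  exists2 e : R, 0 < e & forall y, sqnorm (y - x) < e -> S y.

Definition is_vertex (S : 'rV[R]_d -> Prop) (x : 'rV[R]_d) : Prop :=
  S x /\ forall y z (t : R), S y -> S z -> 0 < t < 1 ->
    x = t *: y + (1 - t) *: z -> y = x /\ z = x.

End Defs.

(* A nonzero lattice point x lying in P has some v in V with |x|^2 <= <x, v>,
   since the linear functional <x, .> attains its maximum over P on V.  If
   x <> v, then |x - v|^2 = |x|^2 - 2<x, v> + |v|^2 <= |v|^2 - |x|^2 <= 2 - 1,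
   with strict inequality when |v|^2 < 2 or |x|^2 < <x, v>; then the nonzero
   lattice vector x - v contradicts the minimum 1.  An interior point x has
   (1 + e) x in P, which gives the strict |x|^2 < <x, v> and rules out x = v
   as well.  When |v|^2 < 2 for all v in V, the same estimate makes each v in V
   the unique maximiser of <., v> over V, hence a vertex. *)
From HB Require Import structures.
From mathcomp Require Import all_boot all_order all_algebra.
From mathcomp Require Import ring lra.
Set Implicit Arguments. Unset Strict Implicit. Unset Printing Implicit Defensive.
Import Order.TTheory GRing.Theory Num.Theory.
Local Open Scope ring_scope.

Section InnerProduct.
Variables (R : realFieldType) (d : nat).
Implicit Types (x y z : 'rV[R]_d).

Definition dot x y : R := \sum_(i < d) x ord0 i * y ord0 i.

Lemma sqnorm_dot x : sqnorm x = dot x x.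
Proof. by apply: eq_bigr => i _; rewrite expr2. Qed.

Lemma dotC x y : dot x y = dot y x.
Proof. by apply: eq_bigr => i _; rewrite mulrC. Qed.

Lemma dot0l y : dot 0 y = 0.
Proof. by rewrite /dot big1 // => i _; rewrite mxE mul0r. Qed.

Lemma dotDl x y z : dot (x + y) z = dot x z + dot y z.
Proof. by rewrite /dot -big_split; apply: eq_bigr => i _; rewrite mxE mulrDl. Qed.

Lemma dotZl a x y : dot (a *: x) y = a * dot x y.
Proof. by rewrite /dot mulr_sumr; apply: eq_bigr => i _; rewrite mxE mulrA. Qed.

Lemma dotZr a x y : dot x (a *: y) = a * dot x y.
Proof. by rewrite dotC dotZl dotC. Qed.

Lemma dot_suml n (l : nat -> R) (F : nat -> 'rV[R]_d) y :
  dot (\sum_(i < n) l i *: F i) y = \sum_(i < n) l i * dot (F i) y.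
Proof.
elim/big_rec2: _ => [|i a b _ IH]; first by rewrite dot0l.
by rewrite dotDl dotZl IH.
Qed.

Lemma sqnormB x y : sqnorm (x - y) = sqnorm x - 2 * dot x y + sqnorm y.
Proof.
rewrite /sqnorm /dot mulr_sumr -sumrB -big_split /=; apply: eq_bigr => i _.
by rewrite !mxE /=; ring.
Qed.

Lemma sqnormZ a x : sqnorm (a *: x) = a ^+ 2 * sqnorm x.
Proof. by rewrite /sqnorm mulr_sumr; apply: eq_bigr => i _; rewrite mxE exprMn. Qed.

Lemma sqnorm_ge0 x : 0 <= sqnorm x.
Proof. by rewrite sumr_ge0 // => i _; rewrite sqr_ge0. Qed.

Lemma sqnorm_eq0 x : (sqnorm x == 0) = (x == 0).
Proof.
rewrite psumr_eq0 => [|i _]; last exact: sqr_ge0.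
apply/allP/eqP => [x0|-> i _]; last by rewrite /= mxE expr0n.
apply/rowP => i; apply/eqP; rewrite mxE -sqrf_eq0.
exact: (implyP (x0 i (mem_index_enum i))).
Qed.

Lemma sqnorm_gt0 x : x != 0 -> 0 < sqnorm x.
Proof. by rewrite lt_def sqnorm_eq0 sqnorm_ge0 andbT. Qed.

Lemma interior_scale_gt1 (S : 'rV[R]_d -> Prop) x :
  interior S x -> exists2 t : R, 1 < t & S (t *: x).
Proof.
move=> [e e_gt0 ball_e]; have s_ge0 := sqnorm_ge0 x; set s := sqnorm x in s_ge0 *.
set a := e / (e + s).
have es_gt0 : 0 < e + s by lra.
have a_gt0 : 0 < a by rewrite divr_gt0.
have a_le1 : a <= 1 by rewrite ler_pdivrMr //; lra.
have as_lt : a * s < e by rewrite /a mulrAC ltr_pdivrMr //; nra.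
exists (1 + a); first lra.
by apply: ball_e; rewrite scalerDl scale1r addrAC subrr add0r sqnormZ -/s; nra.
Qed.

End InnerProduct.

Section ConvexCombinations.
Variables (R : realFieldType) (n : nat) (l : nat -> R).
Hypotheses (l_ge0 : forall i, 0 <= l i) (l_sum1 : \sum_(i < n) l i = 1).

Lemma convex_weight_gt0 : exists i : 'I_n, 0 < l i.
Proof.
apply/existsP; apply: contraT => /existsPn l_le0.
suff : \sum_(i < n) l i = 0 by rewrite l_sum1 => /eqP; rewrite oner_eq0.
by apply: big1 => i _; apply/eqP; rewrite eq_le l_ge0 andbT leNgt l_le0.
Qed.

Lemma convex_comb_le_some (a : 'I_n -> R) :
  exists i : 'I_n, \sum_(j < n) l j * a j <= a i.
Proof.
set S := \sum_(j < n) l j * a j.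
apply/existsP; apply: contraT => /existsPn a_ltS.
have [i li_gt0] := convex_weight_gt0.
have : 0 < \sum_(j < n) l j * (S - a j).
  rewrite (bigD1 i) //= ltr_pwDl ?sumr_ge0 // => [|j _].
    by rewrite mulr_gt0 // subr_gt0 ltNge a_ltS.
  by rewrite mulr_ge0 // subr_ge0 ltW // ltNge a_ltS.
under eq_bigr do rewrite mulrBr.
by rewrite sumrB -mulr_suml l_sum1 mul1r subrr ltxx.
Qed.

End ConvexCombinations.

Section ConvexHull.
Variables (R : realFieldType) (d : nat) (V : seq 'rV[R]_d).
Implicit Types (v w x y z : 'rV[R]_d).

Lemma sum_delta_scale m a (F : nat -> 'rV[R]_d) : (a < m)%N ->
  \sum_(k < m) ((k : nat) == a)%:R *: F k = F a.
Proof.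
move=> lt_am; rewrite (bigD1 (Ordinal lt_am)) //= eqxx scale1r big1 ?addr0 //.
by move=> j /negbTE; rewrite -val_eqE /= => ->; rewrite scale0r.
Qed.

Lemma sum_delta m a : (a < m)%N -> \sum_(k < m) (((k : nat) == a)%:R : R) = 1.
Proof.
move=> lt_am; rewrite (bigD1 (Ordinal lt_am)) //= eqxx big1 ?addr0 //.
by move=> j /negbTE; rewrite -val_eqE /= => ->.
Qed.

Lemma conv_mem v : v \in V -> conv V v.
Proof.
move=> vV; have lt_vV : (index v V < size V)%N by rewrite index_mem.
exists (fun k => (k == index v V)%:R); split; first by move=> i; case: (_ == _).
by rewrite sum_delta // sum_delta_scale // nth_index.
Qed.

Lemma conv0_sym v : v \in V -> - v \in V -> conv V 0.
Proof.
move=> vV NvV.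
have lt_vV : (index v V < size V)%N by rewrite index_mem.
have lt_NvV : (index (- v) V < size V)%N by rewrite index_mem.
exists (fun k => ((k == index v V)%:R + (k == index (- v) V)%:R) / 2); split.
  by move=> i; apply: divr_ge0 => //; apply: addr_ge0; case: (_ == _).
split; first by rewrite -mulr_suml big_split /= !sum_delta //; field.
under eq_bigr do rewrite mulrC -scalerA scalerDl.
by rewrite -scaler_sumr big_split /= !sum_delta_scale // !nth_index // subrr scaler0.
Qed.

Lemma conv_dot_le_mem w y : conv V y -> exists2 v, v \in V & dot y w <= dot v w.
Proof.
move=> [l [l_ge0 [l_sum1 ->]]].
have [i Hi] := convex_comb_le_some l_ge0 l_sum1 (fun i => dot V`_i w).
by exists V`_i; rewrite ?mem_nth // dot_suml.
Qed.

Lemma conv_exposed v w : (forall u, u \in V -> u != v -> dot u w < dot v w) ->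
  forall y, conv V y -> dot y w <= dot v w /\ (dot v w <= dot y w -> y = v).
Proof.
move=> exposed y [l [l_ge0 [l_sum1 ->]]]; rewrite dot_suml.
have gap_ge0 (i : 'I_(size V)) : 0 <= dot v w - dot V`_i w.
  rewrite subr_ge0; case: (eqVneq V`_i v) => [->//|neq_iv].
  by rewrite ltW // exposed ?mem_nth.
have gapE : dot v w - \sum_(i < size V) l i * dot V`_i w =
            \sum_(i < size V) l i * (dot v w - dot V`_i w).
  by under [RHS]eq_bigr do rewrite mulrBr; rewrite sumrB -mulr_suml l_sum1 mul1r.
have gap_sum_ge0 : 0 <= \sum_(i < size V) l i * (dot v w - dot V`_i w).
  by apply: sumr_ge0 => i _; rewrite mulr_ge0.
split=> [|le_vy]; first by rewrite -subr_ge0 gapE.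
have gap_sum0 : \sum_(i < size V) l i * (dot v w - dot V`_i w) = 0.
  by apply/eqP; rewrite eq_le gap_sum_ge0 andbT -gapE subr_le0.
rewrite (eq_bigr (fun i : 'I_(size V) => l i *: v)) => [|i _].
  by rewrite -scaler_suml l_sum1 scale1r.
case: (eqVneq V`_i v) => [->//|neq_iv].
have lt_iv := exposed _ (mem_nth 0 (ltn_ord i)) neq_iv.
have terms_ge0 (j : 'I_(size V)) : true -> 0 <= l j * (dot v w - dot V`_j w).
  by move=> _; rewrite mulr_ge0.
have /eqP := psumr_eq0P terms_ge0 gap_sum0 (i := i) isT.
rewrite mulf_eq0 subr_eq0 => /orP[/eqP->|/eqP vw_eq]; first by rewrite !scale0r.
by rewrite vw_eq ltxx in lt_iv.
Qed.

Lemma exposed_is_vertex v w : v \in V ->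
  (forall u, u \in V -> u != v -> dot u w < dot v w) -> is_vertex (conv V) v.
Proof.
move=> vV exposed; split=> [|y z t Cy Cz /andP[t_gt0 t_lt1] vE].
  exact: conv_mem.
have [le_yv eq_yv] := conv_exposed exposed Cy.
have [le_zv eq_zv] := conv_exposed exposed Cz.
have dotE : dot v w = t * dot y w + (1 - t) * dot z w by rewrite {1}vE dotDl !dotZl.
by split; [apply: eq_yv|apply: eq_zv]; nra.
Qed.

Lemma vertex_mem x : is_vertex (conv V) x -> x \in V.
Proof.
move=> [[l [l_ge0 [l_sum1 xE]]] extreme]; have [i li_gt0] := convex_weight_gt0 l_ge0 l_sum1.
have li_le1 : l i <= 1 by rewrite -l_sum1 (bigD1 i) //= lerDl sumr_ge0.
(* Split off half of the weight of V`_i: x = t V`_i + (1 - t) z with t = l i / 2. *)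
set t := l i / 2.
have t_gt0 : 0 < t by rewrite /t; lra.
have t_lt1 : t < 1 by rewrite /t; lra.
have t1_neq0 : 1 - t != 0 by rewrite subr_eq0 eq_sym lt_eqF.
pose mu j := (l j - t * (j == i)%:R) / (1 - t).
have Cz : conv V (\sum_(k < size V) mu k *: V`_k).
  exists mu; split.
    move=> j; apply: divr_ge0; last by rewrite subr_ge0 ltW.
    case: (eqVneq j i) => [->|_]; first by rewrite mulr1 /t; lra.
    by rewrite mulr0 subr0.
  by rewrite -mulr_suml sumrB -mulr_sumr sum_delta // mulr1 l_sum1 divff.
have xE' : x = t *: V`_i + (1 - t) *: \sum_(k < size V) mu k *: V`_k.
  rewrite scaler_sumr.
  under eq_bigr do rewrite scalerA /mu mulrCA (divff t1_neq0) mulr1 scalerBl -scalerA.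
  by rewrite sumrB -scaler_sumr sum_delta_scale // -xE addrC subrK.
have [<- _] := extreme _ _ t (conv_mem (mem_nth 0 (ltn_ord i))) Cz
  (andb_true_intro (conj t_gt0 t_lt1)) xE'.
exact: mem_nth.
Qed.

Lemma interior_conv_sqnorm_lt_dot x : x != 0 -> interior (conv V) x ->
  exists2 v, v \in V & sqnorm x < dot x v.
Proof.
move=> x_neq0 /interior_scale_gt1[t t_gt1 /(conv_dot_le_mem (t *: x))[v vV]].
rewrite dotZl !dotZr [dot v x]dotC -sqnorm_dot ler_pM2l; last lra.
by move=> le_txv; exists v => //; have := sqnorm_gt0 x_neq0; nra.
Qed.

End ConvexHull.

Section LatticeOfMinimumOne.
Variables (R : realFieldType) (d : nat) (B : 'M[R]_d).
Hypothesis min_ge1 : forall x, in_lattice B x -> x != 0 -> 1 <= sqnorm x.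
Implicit Types (v x : 'rV[R]_d).

Lemma in_latticeB x v : in_lattice B x -> in_lattice B v -> in_lattice B (x - v).
Proof.
move=> [zx ->] [zv ->]; exists (zx - zv); rewrite -mulmxBl; congr (_ *m _).
by apply/matrixP => i j; rewrite !mxE intrB.
Qed.

Lemma lattice_eq_of_sqnormB_lt1 x v : in_lattice B x -> in_lattice B v ->
  sqnorm (x - v) < 1 -> x = v.
Proof.
move=> xL vL lt_xv1; apply/eqP; apply: contraTT lt_xv1 => neq_xv; rewrite -leNgt.
by apply: min_ge1; [exact: in_latticeB | rewrite subr_eq0].
Qed.

Lemma lattice_dot_le_sqnorm x v : in_lattice B x -> in_lattice B v -> x != 0 ->
  sqnorm v <= 2 -> dot x v <= sqnorm x.
Proof.
move=> xL vL x_neq0 v_le2; rewrite leNgt; apply/negP => lt_xv.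
have x_ge1 := min_ge1 xL x_neq0.
have xv : x = v by apply: lattice_eq_of_sqnormB_lt1; rewrite // sqnormB; lra.
by rewrite xv -sqnorm_dot ltxx in lt_xv.
Qed.

Lemma lattice_eq_of_sqnorm_le_dot x v : in_lattice B x -> in_lattice B v ->
  x != 0 -> sqnorm v < 2 -> sqnorm x <= dot x v -> x = v.
Proof.
move=> xL vL x_neq0 v_lt2 le_xv; have x_ge1 := min_ge1 xL x_neq0.
by apply: lattice_eq_of_sqnormB_lt1; rewrite // sqnormB; lra.
Qed.

End LatticeOfMinimumOne.

Theorem proposition11p3 (R : realFieldType) (d : nat) (B : 'M[R]_d)
  (V : seq 'rV[R]_d) :
  full_rank_lattice B ->
  lattice_min B 1 ->
  (forall v, v \in V -> - v \in V) ->
  (forall v, v \in V -> in_lattice B v /\ v != 0) ->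
  (forall v, v \in V -> sqnorm v <= 2) ->
  full_dim V ->
  (forall x, in_lattice B x -> interior (conv V) x -> x = 0) /\
  ((forall v, v \in V -> sqnorm v < 2) ->
     (forall x, in_lattice B x -> (conv V x <-> x \in V \/ x = 0)) /\
     (forall x, is_vertex (conv V) x <-> x \in V)).
Proof.
move=> _ [_ min_ge1] V_sym V_lat V_le2 [v0 v0V _].
have VL v : v \in V -> in_lattice B v by move=> /V_lat[].
split=> [x xL Px | V_lt2].
  apply/eqP; apply: contraT => x_neq0.
  have [v vV lt_xv] := interior_conv_sqnorm_lt_dot x_neq0 Px.
  by rewrite ltNge (lattice_dot_le_sqnorm min_ge1 xL (VL v vV) x_neq0 (V_le2 v vV)) in lt_xv.
split=> [x xL | x]; split.
- move=> Cx; case: (eqVneq x 0) => [|x_neq0]; [by right | left].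
  have [v vV] := conv_dot_le_mem x Cx; rewrite -sqnorm_dot dotC => le_xv.
  by rewrite (lattice_eq_of_sqnorm_le_dot min_ge1 xL (VL v vV) x_neq0 (V_lt2 v vV) le_xv).
- by case=> [/conv_mem //|->]; exact: conv0_sym v0V (V_sym _ v0V).
- exact: vertex_mem.
- move=> xV; apply: (exposed_is_vertex (w := x) xV) => u uV neq_ux.
  rewrite dotC ltNge -sqnorm_dot; apply: contraNN neq_ux => le_xu; apply/eqP/esym.
  have [xL x_neq0] := V_lat x xV.
  exact: (lattice_eq_of_sqnorm_le_dot min_ge1 xL (VL u uV) x_neq0 (V_lt2 u uV) le_xu).
Qed.
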